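(* Let $R$ be a commutative ring with unit and let $E$ be an $R$-module. Then the quasi-coherent $R$-module $\mathbf{E}$ is an $R$-module scheme (i.e. there exists an $R$-module $V$ such that $\mathbf{E}$ is isomorphic, as a functor of $R$-modules, to $\mathbf{V}^* = \mathbf{Hom}_R(\mathbf{V},\mathbf{R})$) if and only if $E$ is a projective $R$-module of finite type.
   Context: All functors are covariant functors on the category of commutative $R$-algebras. For an $R$-module $E$, $\mathbf{E}$ denotes the functor of $R$-modules $B\mapsto E\otimes_R B$; such functors are called quasi-coherent $R$-modules (and $\mathbf{R}$ is the case $E=R$, i.e. $B\mapsto B$). For functors of $R$-modules $F,H$, $\mathbf{Hom}_R(F,H)$ is the functor of $R$-modules $B\mapsto \mathrm{Hom}_B(F_{|B},H_{|B})$, where $F_{|B}$ is the restriction of $F$ to commutative $B$-algebras and $\mathrm{Hom}_B$ denotes morphisms of functors of $B$-modules. One writes $F^*:=\mathbf{Hom}_R(F,\mathbf{R})$. A functor of the form $\mathbf{V}^*$, with $V$ an $R$-module, is called an $R$-module scheme. *)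

From HB Require Import structures.
From mathcomp Require Import all_boot all_order all_algebra.
Set Implicit Arguments. Unset Strict Implicit. Unset Printing Implicit Defensive.
Import GRing.Theory.
Local Open Scope ring_scope.

(* A commutative R-algebra is a commutative ring B with a structure morphism
   R -> B (the zero ring is allowed: we use pz = "possibly zero" rings). *)
Record calg (R : comPzRingType) := CAlg {
  calg_ring :> comPzRingType;
  calg_str : {rmorphism R -> calg_ring} }.

Definition calg_hom (R : comPzRingType) (A B : calg R) :=
  { f : {rmorphism A -> B} | forall r, f (calg_str A r) = calg_str B r }.

Definition hom_fun (R : comPzRingType) (A B : calg R) (f : calg_hom A B) : A -> B :=
  fun a => sval f a.
Coercion hom_fun : calg_hom >-> Funclass.

Definition hom_comp (R : comPzRingType) (A B C : calg R)
  (f : calg_hom A B) (g : calg_hom B C) : calg_hom A C.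
Proof.
exists (sval g \o sval f : {rmorphism A -> C}) => r /=.
by rewrite (svalP f) (svalP g).
Defined.

Record modFunctor (R : comPzRingType) := ModFunctor {
  fobj : calg R -> Type;
  fzero : forall B, fobj B;
  fadd : forall B, fobj B -> fobj B -> fobj B;
  fopp : forall B, fobj B -> fobj B;
  fscale : forall B : calg R, B -> fobj B -> fobj B;
  fmap : forall A B : calg R, calg_hom A B -> fobj A -> fobj B }.
Arguments fzero {R} m B : rename.
Arguments fadd {R} m {B} : rename.
Arguments fopp {R} m {B} : rename.
Arguments fscale {R} m {B} : rename.
Arguments fmap {R} m {A B} : rename.

Record is_modFunctor (R : comPzRingType) (F : modFunctor R) : Prop := {
  mf_addA : forall B (x y z : fobj F B), fadd F x (fadd F y z) = fadd F (fadd F x y) z;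
  mf_addC : forall B (x y : fobj F B), fadd F x y = fadd F y x;
  mf_add0 : forall B (x : fobj F B), fadd F (fzero F B) x = x;
  mf_addN : forall B (x : fobj F B), fadd F (fopp F x) x = fzero F B;
  mf_scale1 : forall B (x : fobj F B), fscale F 1 x = x;
  mf_scaleA : forall (B : calg R) (a b : B) (x : fobj F B), fscale F (a * b) x = fscale F a (fscale F b x);
  mf_scaleDr : forall (B : calg R) (a : B) (x y : fobj F B),
      fscale F a (fadd F x y) = fadd F (fscale F a x) (fscale F a y);
  mf_scaleDl : forall (B : calg R) (a b : B) (x : fobj F B),
      fscale F (a + b) x = fadd F (fscale F a x) (fscale F b x);
  mf_mapD : forall A B (f : calg_hom A B) (x y : fobj F A),
      fmap F f (fadd F x y) = fadd F (fmap F f x) (fmap F f y);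
  mf_mapZ : forall A B (f : calg_hom A B) (a : A) (x : fobj F A),
      fmap F f (fscale F a x) = fscale F (f a) (fmap F f x);
  mf_map_id : forall A (f : calg_hom A A), (forall a, f a = a) ->
      forall x, fmap F f x = x;
  mf_map_comp : forall A B C (f : calg_hom A B) (g : calg_hom B C) (h : calg_hom A C),
      (forall a, h a = g (f a)) -> forall x, fmap F h x = fmap F g (fmap F f x) }.

(* [isQC E F]: the functor of R-modules F is (isomorphic to) the quasi-coherent
   module B |-> E (x)_R B.  Precisely: there is a natural R-linear family
   iota_B : E -> F(B) (iota_B e "= e (x) 1") such that F(B) is generated as a
   B-module by the image of iota_B and iota_B is universal among R-linear maps
   from E to B-modules (the universal property of the tensor product).
   Together these say that the induced natural map E (x)_R B -> F(B) is an
   isomorphism of B-modules. *)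
Definition isQC (R : comPzRingType) (E : lmodType R) (F : modFunctor R) : Prop :=
  is_modFunctor F /\
  exists iota : forall B : calg R, E -> fobj F B,
    [/\ (forall B (e e' : E), iota B (e + e') = fadd F (iota B e) (iota B e')),
        (forall B (r : R) (e : E), iota B (r *: e) = fscale F (calg_str B r) (iota B e)),
        (forall A B (f : calg_hom A B) (e : E), fmap F f (iota A e) = iota B e),
        (forall (B : calg R) (x : fobj F B), exists n (b : 'I_n -> B) (e : 'I_n -> E),
            x = \big[fadd F / fzero F B]_(i < n) fscale F (b i) (iota B (e i))) &
        (forall (B : calg R) (M : lmodType B) (g : E -> M),
            (forall e e', g (e + e') = g e + g e') ->
            (forall (r : R) e, g (r *: e) = calg_str B r *: g e) ->
            exists h : fobj F B -> M,
              [/\ forall x y, h (fadd F x y) = h x + h y,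
                  forall (b : B) x, h (fscale F b x) = b *: h x &
                  forall e, h (iota B e) = g e])].

Section Dual.
Variables (R : comPzRingType) (V : modFunctor R).

Definition balg (B : calg R) := { C : calg R & calg_hom B C }.
Definition balg_alg B (X : balg B) : calg R := projT1 X.
Definition balg_str B (X : balg B) : calg_hom B (balg_alg X) := projT2 X.

(* morphisms of functors of B-modules V|_B -> R|_B *)
Definition dual_prop B (th : forall X : balg B, fobj V (balg_alg X) -> balg_alg X) :=
  [/\ forall X x y, th X (fadd V x y) = th X x + th X y,
      forall X (c : balg_alg X) x, th X (fscale V c x) = c * th X x &
      forall (X Y : balg B) (g : calg_hom (balg_alg X) (balg_alg Y)),
        (forall b, g (balg_str X b) = balg_str Y b) ->
        forall x, th Y (fmap V g x) = g (th X x)].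

Definition dual_obj B := { th | @dual_prop B th }.

Definition dual_zero B : dual_obj B.
Proof.
exists (fun X _ => 0); split.
- by move=> *; rewrite addr0.
- by move=> *; rewrite mulr0.
- by move=> X Y g _ x; rewrite /hom_fun rmorph0.
Defined.

Definition dual_add B (t1 t2 : dual_obj B) : dual_obj B.
Proof.
exists (fun X x => sval t1 X x + sval t2 X x).
case: (svalP t1) => a1 l1 n1; case: (svalP t2) => a2 l2 n2; split.
- by move=> X x y; rewrite a1 a2 addrACA.
- by move=> X c x; rewrite l1 l2 mulrDr.
- by move=> X Y g H x; rewrite (n1 _ _ _ H) (n2 _ _ _ H) /hom_fun rmorphD.
Defined.

Definition dual_opp B (t : dual_obj B) : dual_obj B.
Proof.
exists (fun X x => - sval t X x).
case: (svalP t) => a l n; split.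
- by move=> X x y; rewrite a opprD.
- by move=> X c x; rewrite l mulrN.
- by move=> X Y g H x; rewrite (n _ _ _ H) /hom_fun rmorphN.
Defined.

Definition dual_scale (B : calg R) (b : B) (t : dual_obj B) : dual_obj B.
Proof.
exists (fun X x => balg_str X b * sval t X x).
case: (svalP t) => a l n; split.
- by move=> X x y; rewrite a mulrDr.
- by move=> X c x; rewrite l mulrCA.
- by move=> X Y g H x; rewrite (n _ _ _ H) /hom_fun rmorphM; congr (_ * _); have := H b; rewrite /hom_fun => ->.
Defined.

Definition balg_pull A B (f : calg_hom A B) (X : balg B) : balg A :=
  existT _ (balg_alg X) (hom_comp f (balg_str X)).

Definition dual_map A B (f : calg_hom A B) (t : dual_obj A) : dual_obj B.
Proof.
exists (fun X x => sval t (balg_pull f X) x).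
case: (svalP t) => a l n; split.
- by move=> X x y; rewrite a.
- by move=> X c x; rewrite l.
- move=> X Y g H x; apply: (n (balg_pull f X) (balg_pull f Y) g) => c /=.
  exact: (H (f c)).
Defined.

Definition dual : modFunctor R :=
  @ModFunctor R dual_obj dual_zero dual_add dual_opp dual_scale dual_map.

End Dual.

Definition finite_type (R : pzRingType) (E : lmodType R) : Prop :=
  exists n (v : 'I_n -> E), forall e : E, exists c : 'I_n -> R,
    e = \sum_(i < n) c i *: v i.

Definition projective (R : pzRingType) (E : lmodType R) : Prop :=
  forall (M N : lmodType R) (p : {linear M -> N}) (f : {linear E -> N}),
    (forall y, exists x, p x = y) ->
    exists g : {linear E -> M}, forall e, p (g e) = f e.

(* Both directions go through a dual basis (e_i, psi_i) of E, i.e. a finite family with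
   x = sum_i psi_i(x) e_i, which exists exactly when E is projective of finite type.

   Given a dual basis, the matrix A = (psi_i(e_j)) is idempotent.  V := {x in R^n | xA = x}
   is a model of E^*, the functor B |-> {x in B^n | x A_B = x} is its quasi-coherent module,
   and the coordinates t |-> t(row_i A) identify E (x) B with the dual of that functor.

   Conversely, let E = V^* with V quasi-coherent, and let <x, v> in R be the induced pairing.
   Over the square-zero extension R (+) V, the map v |-> (0, v) is an element of V^*(R (+) V);
   writing it as a finite combination of elements e_i of E and reading off the V-component
   gives v = sum_i <e_i, v> w_i.  Dualising this decomposition, x = sum_i <x, w_i> e_i for
   every x in E: a dual basis of E. *)

From HB Require Import structures.
From mathcomp Require Import all_boot all_order all_algebra.
From Stdlib Require Import FunctionalExtensionality ProofIrrelevance IndefiniteDescription.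
Set Implicit Arguments. Unset Strict Implicit. Unset Printing Implicit Defensive.
Import GRing.Theory.
Local Open Scope ring_scope.

Section DualBasis.
Variable R : comPzRingType.

Definition dual_basis (E : lmodType R) n (e : 'I_n -> E) (psi : 'I_n -> {scalar E}) : Prop :=
  forall x, x = \sum_(i < n) psi i x *: e i.

Definition linear_of (U W : lmodType R) (f : U -> W) (fL : linear f) : {linear U -> W} :=
  HB.pack f (GRing.isLinear.Build _ _ _ _ f fL).

Definition scalar_of (E : lmodType R) (f : E -> R) (fL : linear_for *%R f) : {scalar E} :=
  HB.pack f (GRing.isLinear.Build _ _ _ _ f fL).

Lemma scalar_sum (E : lmodType R) (phi : {scalar E}) m (c : 'I_m -> R) (x : 'I_m -> E) :
  phi (\sum_(j < m) c j *: x j) = \sum_(j < m) c j * phi (x j).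
Proof. by rewrite linear_sum; apply: eq_bigr => j _; rewrite linearZ. Qed.

Lemma dual_basis_projective (E : lmodType R) n (e : 'I_n -> E) (psi : 'I_n -> {scalar E}) :
  dual_basis e psi -> projective E.
Proof.
move=> dec M N p f p_surj.
have lift i : {x | p x = f (e i)} by apply: constructive_indefinite_description.
pose g x := \sum_(i < n) psi i x *: sval (lift i).
have gL : linear g.
  move=> a x y; rewrite /g scaler_sumr -big_split /=; apply: eq_bigr => i _.
  by rewrite linearP scalerDl scalerA.
exists (linear_of gL) => x /=.
rewrite /g linear_sum {2}(dec x) linear_sum; apply: eq_bigr => i _.
by rewrite !linearZ (svalP (lift i)).
Qed.

Lemma projective_dual_basis (E : lmodType R) n (e : 'I_n -> E) :
  projective E -> (forall x, exists c : 'I_n -> R, x = \sum_(i < n) c i *: e i) ->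
  exists psi : 'I_n -> {scalar E}, dual_basis e psi.
Proof.
move=> proj span.
pose comb (c : 'rV[R]_n) := \sum_(i < n) c 0 i *: e i.
have combL : linear comb.
  move=> a c d; rewrite /comb scaler_sumr -big_split /=; apply: eq_bigr => i _.
  by rewrite !mxE scalerDl scalerA.
have comb_surj (x : E) : exists c, linear_of combL c = x.
  have [c ->] := span x; exists (\row_i c i).
  by apply: eq_bigr => i _; rewrite mxE.
have [g comb_g] := proj _ _ _ idfun comb_surj.
have coordL i : linear_for *%R (fun x => g x 0 i) by move=> a x y; rewrite linearP !mxE.
by exists (fun i => scalar_of (coordL i)) => x; rewrite -[x in LHS]comb_g.
Qed.

Lemma dual_basisP (E : lmodType R) :
  projective E /\ finite_type E <->
  exists n (e : 'I_n -> E) (psi : 'I_n -> {scalar E}), dual_basis e psi.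
Proof.
split=> [[proj [n [e span]]] | [n [e [psi dec]]]].
  by have [psi dec] := projective_dual_basis proj span; exists n, e, psi.
split; first exact: dual_basis_projective dec.
by exists n, e => x; exists (psi^~ x).
Qed.

End DualBasis.

Section ModFunctorTheory.
Variables (R : comPzRingType) (F : modFunctor R) (HF : is_modFunctor F).

Lemma fadd_idem B (x : fobj F B) : fadd F x x = x -> x = fzero F B.
Proof.
move=> xx; have := mf_addN HF x.
by rewrite -{2}xx (mf_addA HF) (mf_addN HF) (mf_add0 HF).
Qed.

Lemma fmap0 A B (f : calg_hom A B) : fmap F f (fzero F A) = fzero F B.
Proof. by apply: fadd_idem; rewrite -(mf_mapD HF) (mf_add0 HF). Qed.

Lemma fmap_sum A B (f : calg_hom A B) n (G : 'I_n -> fobj F A) :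
  fmap F f (\big[fadd F/fzero F A]_(i < n) G i) =
  \big[fadd F/fzero F B]_(i < n) fmap F f (G i).
Proof. exact: (big_morph _ (mf_mapD HF f) (fmap0 f)). Qed.

Lemma additive_fsum B (M : zmodType) (h : fobj F B -> M) :
  (forall x y, h (fadd F x y) = h x + h y) ->
  forall n (G : 'I_n -> fobj F B),
  h (\big[fadd F/fzero F B]_(i < n) G i) = \sum_(i < n) h (G i).
Proof.
move=> hD n G; apply: (big_morph h hD).
by apply: (@addrI _ (h (fzero F B))); rewrite -hD (mf_add0 HF) addr0.
Qed.

End ModFunctorTheory.

Section CAlgebras.
Variable R : comPzRingType.

Definition id_hom (B : calg R) : calg_hom B B :=
  exist _ (idfun : {rmorphism B -> B}) (fun r => erefl).

Definition base_calg : calg R := @CAlg R R idfun.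

Definition str_hom (B : calg R) : calg_hom base_calg B :=
  exist _ (calg_str B) (fun r => erefl).

Definition self_balg (B : calg R) : balg B := existT _ B (id_hom B).

Variables (A B : calg R) (f : calg_hom A B).

Lemma calg_hom1 : f 1 = 1. Proof. exact: rmorph1. Qed.
Lemma calg_homD a b : f (a + b) = f a + f b. Proof. exact: rmorphD. Qed.
Lemma calg_homM a b : f (a * b) = f a * f b. Proof. exact: rmorphM. Qed.
Lemma calg_hom_str r : f (calg_str A r) = calg_str B r. Proof. exact: (svalP f r). Qed.
Lemma calg_hom_sum n (G : 'I_n -> A) : f (\sum_(i < n) G i) = \sum_(i < n) f (G i).
Proof. exact: rmorph_sum. Qed.

End CAlgebras.

Section DualFunctor.
Variables (R : comPzRingType) (V : modFunctor R).

Lemma dual_ext B (t1 t2 : dual_obj V B) :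
  (forall X x, sval t1 X x = sval t2 X x) -> t1 = t2.
Proof.
case: t1 t2 => [f1 p1] [f2 p2] /= eq12.
have f12 : f1 = f2.
  by apply: functional_extensionality_dep => X; apply: functional_extensionality.
by subst; congr exist; apply: proof_irrelevance.
Qed.

Section Eval.
Variables (B : calg R) (t : dual_obj V B).

Lemma dual_evalD X x y : sval t X (fadd V x y) = sval t X x + sval t X y.
Proof. by case: (svalP t) => tD _ _; apply: tD. Qed.

Lemma dual_evalZ X c x : sval t X (fscale V c x) = c * sval t X x.
Proof. by case: (svalP t) => _ tZ _; apply: tZ. Qed.

Lemma dual_eval_natural (X Y : balg B) (g : calg_hom (balg_alg X) (balg_alg Y)) :
  (forall b, g (balg_str X b) = balg_str Y b) ->
  forall x, sval t Y (fmap V g x) = g (sval t X x).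
Proof. by case: (svalP t) => _ _ tN; apply: tN. Qed.

End Eval.

Lemma dual_sumE B n (G : 'I_n -> dual_obj V B) X x :
  sval (\big[fadd (dual V)/fzero (dual V) B]_(i < n) G i) X x =
  \sum_(i < n) sval (G i) X x.
Proof. exact: (big_morph (fun t => sval t X x)). Qed.

Hypothesis HV : is_modFunctor V.

Lemma dual_eval_sum B (t : dual_obj V B) X n (G : 'I_n -> fobj V (balg_alg X)) :
  sval t X (\big[fadd V/fzero V _]_(i < n) G i) = \sum_(i < n) sval t X (G i).
Proof. exact: (additive_fsum HV (fun x y => dual_evalD t x y)). Qed.

Lemma dual_eval_str_ext B (t : dual_obj V B) (C : calg R) (s1 s2 : calg_hom B C) :
  (forall b, s1 b = s2 b) ->
  forall x, sval t (existT _ C s1) x = sval t (existT _ C s2) x.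
Proof.
move=> s12 x.
have := dual_eval_natural t (X := existT _ C s1) (Y := existT _ C s2) (g := id_hom C) s12 x.
by rewrite (mf_map_id HV).
Qed.

Lemma dual_is_modFunctor : is_modFunctor (dual V).
Proof.
split.
- by move=> B x y z; apply: dual_ext => X v /=; rewrite addrA.
- by move=> B x y; apply: dual_ext => X v /=; rewrite addrC.
- by move=> B x; apply: dual_ext => X v /=; rewrite add0r.
- by move=> B x; apply: dual_ext => X v /=; rewrite addNr.
- by move=> B x; apply: dual_ext => X v /=; rewrite calg_hom1 mul1r.
- by move=> B a b x; apply: dual_ext => X v /=; rewrite calg_homM mulrA.
- by move=> B a x y; apply: dual_ext => X v /=; rewrite mulrDr.
- by move=> B a b x; apply: dual_ext => X v /=; rewrite calg_homD mulrDl.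
- by move=> A B f x y; apply: dual_ext.
- by move=> A B f a x; apply: dual_ext.
- move=> A f f_id x; apply: dual_ext => -[C s] v /=.
  apply: dual_eval_str_ext => b; transitivity (s (f b)) => //.
  by rewrite f_id.
- move=> A B C f g h hfg x; apply: dual_ext => -[D s] v /=.
  apply: dual_eval_str_ext => b; transitivity (s (h b)) => //.
  by rewrite hfg.
Qed.

End DualFunctor.

Section QuasiCoherent.
Variables (R : comPzRingType) (E : lmodType R) (F : modFunctor R).

Record qc_embedding := QCEmbedding {
  qc_iota :> forall B : calg R, E -> fobj F B;
  qc_iotaD : forall B (e e' : E), qc_iota B (e + e') = fadd F (qc_iota B e) (qc_iota B e');
  qc_iotaZ : forall B (r : R) (e : E),
    qc_iota B (r *: e) = fscale F (calg_str B r) (qc_iota B e);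
  qc_iota_natural : forall A B (f : calg_hom A B) (e : E),
    fmap F f (qc_iota A e) = qc_iota B e;
  qc_iota_span : forall (B : calg R) (x : fobj F B),
    exists n (b : 'I_n -> B) (e : 'I_n -> E),
      x = \big[fadd F / fzero F B]_(i < n) fscale F (b i) (qc_iota B (e i));
  qc_iota_universal : forall (B : calg R) (M : lmodType B) (g : E -> M),
    (forall e e', g (e + e') = g e + g e') ->
    (forall (r : R) e, g (r *: e) = calg_str B r *: g e) ->
    exists h : fobj F B -> M,
      [/\ forall x y, h (fadd F x y) = h x + h y,
          forall (b : B) x, h (fscale F b x) = b *: h x &
          forall e, h (qc_iota B e) = g e] }.

Lemma isQCP : isQC E F <-> is_modFunctor F /\ inhabited qc_embedding.
Proof.
split=> [[HF [iota [iD iZ iN span univ]]] | [HF [[iota iD iZ iN span univ]]]].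
  by split=> //; constructor; exact: QCEmbedding iD iZ iN span univ.
by split=> //; exists iota.
Qed.

Hypothesis HF : is_modFunctor F.
Variable iota : forall B : calg R, E -> fobj F B.
Hypothesis iotaD : forall B (e e' : E), iota B (e + e') = fadd F (iota B e) (iota B e').
Hypothesis iotaZ :
  forall B (r : R) (e : E), iota B (r *: e) = fscale F (calg_str B r) (iota B e).
Hypothesis iota_natural :
  forall A B (f : calg_hom A B) (e : E), fmap F f (iota A e) = iota B e.

Variables (n : nat) (w : 'I_n -> E) (c : 'I_n -> {scalar E}).
Hypothesis wc : dual_basis w c.
Variable coord : forall B : calg R, 'I_n -> fobj F B -> B.
Arguments coord : clear implicits.
Hypothesis coordD : forall B i x y, coord B i (fadd F x y) = coord B i x + coord B i y.
Hypothesis coordZ :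
  forall (B : calg R) i (b : B) x, coord B i (fscale F b x) = b * coord B i x.
Hypothesis coord_iota : forall B i e, coord B i (iota B e) = calg_str B (c i e).
Hypothesis coord_span : forall B x,
  x = \big[fadd F / fzero F B]_(i < n) fscale F (coord B i x) (iota B (w i)).

Lemma isQC_of_coordinates : isQC E F.
Proof.
split=> //; exists iota; split=> // [B x | B M g gD gZ].
  by exists n, (coord B^~ x), w; apply: coord_span.
have g_sum m (G : 'I_m -> E) : g (\sum_(i < m) G i) = \sum_(i < m) g (G i).
  apply: (big_morph g gD).
  by apply: (@addrI _ (g 0)); rewrite -gD !addr0.
exists (fun x => \sum_(i < n) coord B i x *: g (w i)); split.
- move=> x y; rewrite -big_split; apply: eq_bigr => i _.
  by rewrite coordD scalerDl.
- move=> b x; rewrite scaler_sumr; apply: eq_bigr => i _.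
  by rewrite coordZ scalerA.
- move=> e; rewrite [in RHS](wc e) g_sum; apply: eq_bigr => i _.
  by rewrite coord_iota gZ.
Qed.

End QuasiCoherent.

Section FixedRows.
Variables (B : pzRingType) (n : nat) (P : 'M[B]_n).

Record fixed_rows :=
  FixedRows { fixed_row : 'rV[B]_n; fixed_rowP : fixed_row *m P == fixed_row }.

HB.instance Definition _ := [isSub for fixed_row].
HB.instance Definition _ := [Choice of fixed_rows by <:].

Lemma fixed_rows_closed : subsemimod_closed [pred x : 'rV[B]_n | x *m P == x].
Proof.
split; first split.
- by rewrite inE mul0mx.
- by move=> x y; rewrite !inE mulmxDl => /eqP -> /eqP ->.
- by move=> a x; rewrite !inE -scalemxAl => /eqP ->.
Qed.

HB.instance Definition _ :=
  GRing.SubChoice_isSubLmodule.Build B 'rV[B]_n _ fixed_rows fixed_rows_closed.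

Lemma fixed_row_mul (x : fixed_rows) : val x *m P = val x.
Proof. exact/eqP/fixed_rowP. Qed.

Lemma fixed_row_sum m (G : 'I_m -> fixed_rows) :
  fixed_row (\sum_(i < m) G i) = \sum_(i < m) fixed_row (G i).
Proof. exact: (raddf_sum (val : fixed_rows -> _)). Qed.

End FixedRows.

Section DualBasisQuasiCoherent.
Variables (R : comPzRingType) (E : lmodType R) (n : nat).
Variables (e : 'I_n -> E) (psi : 'I_n -> {scalar E}).
Hypothesis dec : dual_basis e psi.

Definition dual_basis_mx : 'M[R]_n := \matrix_(i, j) psi i (e j).
Local Notation A := dual_basis_mx.

Lemma dual_basis_mx_idem : A *m A = A.
Proof.
apply/matrixP => i k; rewrite !mxE [in RHS](dec (e k)) scalar_sum.
by apply: eq_bigr => j _; rewrite !mxE mulrC.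
Qed.

Definition mx_at (B : calg R) : 'M[B]_n := map_mx (calg_str B) A.

Lemma map_mx_at (B C : calg R) (f : calg_hom B C) : map_mx f (mx_at B) = mx_at C.
Proof. by apply/matrixP => i j; rewrite !mxE calg_hom_str. Qed.

Definition Vmod : lmodType R := fixed_rows A.

Definition Vfun_obj (B : calg R) : lmodType B := fixed_rows (mx_at B).

Lemma Vfun_mapP (B C : calg R) (f : calg_hom B C) (x : Vfun_obj B) :
  map_mx f (val x) *m mx_at C == map_mx f (val x).
Proof. by rewrite -(map_mx_at f) -map_mxM (fixed_row_mul x). Qed.

Definition Vfun : modFunctor R :=
  @ModFunctor R Vfun_obj (fun B => 0) (fun B => +%R) (fun B => -%R) (fun B => *:%R)
    (fun B C f x => FixedRows (Vfun_mapP f x)).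

Lemma Vfun_is_modFunctor : is_modFunctor Vfun.
Proof.
split=> /=.
- by move=> B x y z; rewrite addrA.
- by move=> B x y; rewrite addrC.
- by move=> B x; rewrite add0r.
- by move=> B x; rewrite addNr.
- by move=> B x; rewrite scale1r.
- by move=> B a b x; rewrite scalerA.
- by move=> B a x y; rewrite scalerDr.
- by move=> B a b x; rewrite scalerDl.
- by move=> B C f x y; apply: val_inj; rewrite /= !raddfD.
- move=> B C f a x; apply: val_inj; apply/matrixP => i j.
  by rewrite /= !mxE calg_homM.
- move=> B f f_id x; apply: val_inj; apply/matrixP => i j.
  by rewrite /= mxE f_id.
- move=> B C D f g h hfg x; apply: val_inj; apply/matrixP => i j.
  by rewrite /= !mxE hfg.
Qed.

Lemma iota_VP (B : calg R) (v : Vmod) :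
  map_mx (calg_str B) (val v) *m mx_at B == map_mx (calg_str B) (val v).
Proof. by rewrite -map_mxM (fixed_row_mul v). Qed.

Definition iota_V (B : calg R) (v : Vmod) : fobj Vfun B := FixedRows (iota_VP B v).

Lemma iota_V_natural (B C : calg R) (f : calg_hom B C) (v : Vmod) :
  fmap Vfun f (iota_V B v) = iota_V C v.
Proof. by apply: val_inj; apply/matrixP => i j; rewrite /= !mxE calg_hom_str. Qed.

Lemma row_dual_basis_mxP i : row i A *m A == row i A.
Proof. by rewrite -row_mul dual_basis_mx_idem. Qed.

Definition wV i : Vmod := FixedRows (row_dual_basis_mxP i).

Lemma coordV_linear i : linear_for *%R (fun v : Vmod => val v 0 i).
Proof. by move=> a u v; rewrite linearP !mxE. Qed.

Lemma Vmod_dual_basis : dual_basis wV (fun i => scalar_of (coordV_linear i)).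
Proof.
move=> v; apply: val_inj; rewrite raddf_sum -[LHS](fixed_row_mul v) mulmx_sum_row.
by apply: eq_bigr.
Qed.

Lemma fixed_rows_span (B : calg R) (x : fobj Vfun B) :
  x = \big[fadd Vfun/fzero Vfun B]_(i < n) fscale Vfun (val x 0 i) (iota_V B (wV i)).
Proof.
apply: val_inj; rewrite [RHS]fixed_row_sum -[LHS](fixed_row_mul x) mulmx_sum_row.
by apply: eq_bigr => i _; rewrite /= map_row.
Qed.

Lemma isQC_Vfun : isQC Vmod Vfun.
Proof.
apply: (isQC_of_coordinates Vfun_is_modFunctor _ _ iota_V_natural Vmod_dual_basis
          (coord := fun B i x => val x 0 i)) => /=.
- by move=> B v v'; apply: val_inj; rewrite /= !raddfD.
- move=> B r v; apply: val_inj; apply/matrixP => i j.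
  by rewrite /= !mxE rmorphM.
- by move=> B i x y; rewrite mxE.
- by move=> B i b x; rewrite mxE.
- by move=> B i v; rewrite mxE.
- exact: fixed_rows_span.
Qed.

Definition iota_E_eval (B : calg R) (x : E) (X : balg B) (v : fobj Vfun (balg_alg X)) :
  balg_alg X := \sum_(j < n) val v 0 j * calg_str (balg_alg X) (psi j x).
Arguments iota_E_eval : clear implicits.

Lemma iota_E_evalP (B : calg R) (x : E) : dual_prop (iota_E_eval B x).
Proof.
split=> [X u v | X a v | X Y g gXY v]; rewrite /iota_E_eval.
- by rewrite -big_split; apply: eq_bigr => j _; rewrite mxE mulrDl.
- by rewrite mulr_sumr; apply: eq_bigr => j _; rewrite mxE mulrA.
- by rewrite calg_hom_sum; apply: eq_bigr => j _; rewrite mxE calg_homM calg_hom_str.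
Qed.

Definition iota_E (B : calg R) (x : E) : fobj (dual Vfun) B := exist _ _ (iota_E_evalP B x).

Definition coordE (B : calg R) i (t : fobj (dual Vfun) B) : B :=
  sval t (self_balg B) (iota_V B (wV i)).

Lemma coordE_iota_E B i x : coordE i (iota_E B x) = calg_str B (psi i x).
Proof.
rewrite [in RHS](dec x) scalar_sum rmorph_sum; apply: eq_bigr => j _.
by rewrite !mxE rmorphM mulrC.
Qed.

Lemma dual_Vfun_span (B : calg R) (t : fobj (dual Vfun) B) :
  t = \big[fadd (dual Vfun)/fzero (dual Vfun) B]_(i < n)
        fscale (dual Vfun) (coordE i t) (iota_E B (e i)).
Proof.
apply: dual_ext => X v; rewrite dual_sumE {1}(fixed_rows_span v).
rewrite dual_eval_sum; last exact: Vfun_is_modFunctor.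
apply: eq_bigr => k _.
have t_iV : sval t X (iota_V _ (wV k)) = balg_str X (coordE k t).
  rewrite -(iota_V_natural (balg_str X)).
  exact: (dual_eval_natural t (X := self_balg B)).
have v_fixed : val v 0 k = \sum_(j < n) val v 0 j * calg_str (balg_alg X) (psi j (e k)).
  by rewrite -[in LHS](fixed_row_mul v) mxE; apply: eq_bigr => j _; rewrite !mxE.
by rewrite dual_evalZ t_iV v_fixed mulrC.
Qed.

Lemma isQC_dual_Vfun : isQC E (dual Vfun).
Proof.
apply: (isQC_of_coordinates (dual_is_modFunctor Vfun_is_modFunctor)
          (iota := iota_E) _ _ _ dec (coord := coordE)).
- move=> B x y; apply: dual_ext => X v /=; rewrite /iota_E_eval -big_split.
  by apply: eq_bigr => j _; rewrite raddfD rmorphD mulrDr.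
- move=> B r x; apply: dual_ext => X v /=; rewrite /iota_E_eval mulr_sumr.
  by apply: eq_bigr => j _; rewrite linearZ calg_hom_str rmorphM mulrCA.
- by move=> B C f x; apply: dual_ext.
- by [].
- by [].
- exact: coordE_iota_E.
- exact: dual_Vfun_span.
Qed.

End DualBasisQuasiCoherent.

Section SquareZeroExtension.
Variables (R : comPzRingType) (V : lmodType R).

Definition sqz := (R * V)%type.
HB.instance Definition _ := GRing.Zmodule.on sqz.

Definition sqz_mul (x y : sqz) : sqz := (x.1 * y.1, x.1 *: y.2 + y.1 *: x.2).

Lemma sqz_mulA : associative sqz_mul.
Proof.
move=> [a u] [b v] [c w]; congr (_, _); first by rewrite /= mulrA.
by rewrite /= !scalerDr !scalerA addrA [c * a]mulrC [c * b]mulrC.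
Qed.

Lemma sqz_mulC : commutative sqz_mul.
Proof. by move=> [a u] [b v]; rewrite /sqz_mul /= mulrC addrC. Qed.

Lemma sqz_mul1 : left_id ((1, 0) : sqz) sqz_mul.
Proof. by move=> [a u]; rewrite /sqz_mul /= mul1r scale1r scaler0 addr0. Qed.

Lemma sqz_mulDl : left_distributive sqz_mul +%R.
Proof.
move=> [a u] [b v] [c w]; congr (_, _); first by rewrite /= mulrDl.
by rewrite /= scalerDl scalerDr addrACA.
Qed.

HB.instance Definition _ :=
  GRing.Zmodule_isComPzRing.Build sqz sqz_mulA sqz_mulC sqz_mul1 sqz_mulDl.

Definition sqz_in (r : R) : sqz := (r, 0).

Lemma sqz_in_is_zmod_morphism : zmod_morphism sqz_in.
Proof. by move=> a b; congr (_, _); rewrite subrr. Qed.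

Lemma sqz_in_is_monoid_morphism : monoid_morphism sqz_in.
Proof. by split=> // a b; rewrite /sqz_in /GRing.mul /= /sqz_mul /= !scaler0 addr0. Qed.

HB.instance Definition _ :=
  GRing.isZmodMorphism.Build R sqz sqz_in sqz_in_is_zmod_morphism.
HB.instance Definition _ :=
  GRing.isMonoidMorphism.Build R sqz sqz_in sqz_in_is_monoid_morphism.

Definition sqz_calg : calg R := @CAlg R sqz sqz_in.

Definition sqz_eps (v : V) : sqz_calg := (0, v).

Lemma sqz_epsD v v' : sqz_eps (v + v') = sqz_eps v + sqz_eps v'.
Proof. by rewrite /sqz_eps -[RHS]/((0 : R) + 0, v + v') add0r. Qed.

Lemma sqz_epsZ r v : sqz_eps (r *: v) = calg_str sqz_calg r * sqz_eps v.
Proof. by rewrite /sqz_eps -[RHS]/(r * 0, r *: v + 0 *: 0) mulr0 scaler0 addr0. Qed.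

Lemma sqz_snd_sum m (G : 'I_m -> sqz_calg) : (\sum_(i < m) G i).2 = \sum_(i < m) (G i).2.
Proof. exact: (big_morph snd). Qed.

End SquareZeroExtension.
Section QuasiCoherentDual.
Variables (R : comPzRingType) (E V : lmodType R) (Vb : modFunctor R).
Hypothesis HVb : is_modFunctor Vb.
Variables (iV : qc_embedding V Vb) (iE : qc_embedding E (dual Vb)).

Lemma dual_eval_iV B (t : dual_obj Vb B) X v :
  sval t X (iV (balg_alg X) v) = balg_str X (sval t (self_balg B) (iV B v)).
Proof.
rewrite -(qc_iota_natural iV (balg_str X)).
exact: (dual_eval_natural t (X := self_balg B) (Y := X) (g := balg_str X) (fun b => erefl)).
Qed.

Lemma dual_eq_on_iV B (t1 t2 : dual_obj Vb B) :
  (forall v, sval t1 (self_balg B) (iV B v) = sval t2 (self_balg B) (iV B v)) -> t1 = t2.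
Proof.
move=> t12; apply: dual_ext => X x; have [n [b [v ->]]] := qc_iota_span iV x.
rewrite (dual_eval_sum HVb t1) (dual_eval_sum HVb t2); apply: eq_bigr => i _.
by rewrite (dual_evalZ t1) (dual_evalZ t2) (dual_eval_iV t1) (dual_eval_iV t2) t12.
Qed.
Definition pairing (x : E) (v : V) : R :=
  sval (iE (base_calg R) x) (self_balg _) (iV (base_calg R) v).

Lemma pairing_linear v : linear_for *%R (pairing^~ v).
Proof. by move=> a x y; rewrite /pairing qc_iotaD qc_iotaZ. Qed.

Lemma pairing_sumr x m (c : 'I_m -> R) (w : 'I_m -> V) :
  pairing x (\sum_(i < m) c i *: w i) = \sum_(i < m) c i * pairing x (w i).
Proof.
have pairingD v v' : pairing x (v + v') = pairing x v + pairing x v'.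
  by rewrite /pairing qc_iotaD dual_evalD.
have pairing0 : pairing x 0 = 0.
  by apply: (@addrI _ (pairing x 0)); rewrite -pairingD !addr0.
rewrite (big_morph _ pairingD pairing0); apply: eq_bigr => i _.
by rewrite /pairing qc_iotaZ dual_evalZ.
Qed.

Lemma pairing_sqz x v :
  sval (iE (sqz_calg V) x) (self_balg _) (iV _ v) = sqz_in V (pairing x v).
Proof.
rewrite -(qc_iota_natural iE (str_hom (sqz_calg V))).
exact: (dual_eval_iV _ (balg_pull (str_hom _) (self_balg _))).
Qed.

Section Tautological.
Variable X : balg (sqz_calg V).

Let eps v := balg_str X (sqz_eps v).

Lemma epsD v v' : eps (v + v') = eps v + eps v'.
Proof. by rewrite /eps sqz_epsD calg_homD. Qed.

Lemma epsZ r v : eps (r *: v) = calg_str (balg_alg X) r * eps v.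
Proof. by rewrite /eps sqz_epsZ calg_homM calg_hom_str. Qed.

Definition taut_eval : fobj Vb (balg_alg X) -> balg_alg X :=
  sval (constructive_indefinite_description _
    (qc_iota_universal iV (M := (calg_ring (balg_alg X))^o) epsD epsZ)).

Lemma taut_evalP :
  [/\ forall x y, taut_eval (fadd Vb x y) = taut_eval x + taut_eval y,
      forall c x, taut_eval (fscale Vb c x) = c * taut_eval x &
      forall v, taut_eval (iV _ v) = eps v].
Proof. by rewrite /taut_eval; case: constructive_indefinite_description. Qed.

End Tautological.
Arguments taut_eval : clear implicits.

Lemma taut_eval_natural (X Y : balg (sqz_calg V)) (g : calg_hom (balg_alg X) (balg_alg Y)) :
  (forall b, g (balg_str X b) = balg_str Y b) ->
  forall x, taut_eval Y (fmap Vb g x) = g (taut_eval X x).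
Proof.
move=> gXY x; have [n [b [v ->]]] := qc_iota_span iV x.
have [XD XZ Xi] := taut_evalP X; have [YD YZ Yi] := taut_evalP Y.
rewrite (fmap_sum HVb) (additive_fsum HVb YD) (additive_fsum HVb XD) calg_hom_sum.
apply: eq_bigr => i _.
by rewrite (mf_mapZ HVb) (qc_iota_natural iV) YZ XZ Yi Xi calg_homM gXY.
Qed.

Lemma taut_dual_prop : dual_prop taut_eval.
Proof.
split=> [X | X |]; [by case: (taut_evalP X) | by case: (taut_evalP X) |].
exact: taut_eval_natural.
Qed.

Definition taut : fobj (dual Vb) (sqz_calg V) := exist _ taut_eval taut_dual_prop.

Lemma V_spanned_by_pairing :
  exists n (x : 'I_n -> E) (w : 'I_n -> V), forall v, v = \sum_(i < n) pairing (x i) v *: w i.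
Proof.
have [n [b [x taut_span]]] := qc_iota_span iE taut.
exists n, x, (fun i => (b i).2) => v.
have := congr1 (fun t : fobj (dual Vb) _ => sval t (self_balg _) (iV _ v)) taut_span.
rewrite dual_sumE /=; case: (taut_evalP (self_balg _)) => _ _ -> taut_v.
transitivity (balg_str (self_balg _) (sqz_eps v)).2; first by [].
rewrite taut_v sqz_snd_sum; apply: eq_bigr => i _.
by rewrite /= pairing_sqz /= scaler0 add0r.
Qed.

Lemma dual_basis_of_qc_dual :
  exists n (e : 'I_n -> E) (psi : 'I_n -> {scalar E}), dual_basis e psi.
Proof.
have [n [e [w w_span]]] := V_spanned_by_pairing.
exists n, e, (fun i => scalar_of (pairing_linear (w i))) => x.
have [h [hD hZ h_iE]] := qc_iota_universal iE (B := base_calg R) (M := E) (g := idfun)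
                           (fun _ _ => erefl) (fun _ _ => erefl).
have iE_x : iE (base_calg R) x = \big[fadd (dual Vb)/fzero (dual Vb) _]_(i < n)
              fscale (dual Vb) (B := base_calg R) (pairing x (w i)) (iE _ (e i)).
  apply: dual_eq_on_iV => v; rewrite dual_sumE.
  transitivity (pairing x v); first by [].
  by rewrite {1}(w_span v) pairing_sumr; apply: eq_bigr => i _; rewrite mulrC.
rewrite -[x in LHS]h_iE iE_x (additive_fsum (dual_is_modFunctor HVb) hD).
by apply: eq_bigr => i _; rewrite hZ h_iE.
Qed.

End QuasiCoherentDual.

Theorem mainTheorem1 (R : comPzRingType) (E : lmodType R) :
  (exists (V : lmodType R) (Vb : modFunctor R), isQC V Vb /\ isQC E (dual Vb))
  <-> (projective E /\ finite_type E).
Proof.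
rewrite dual_basisP; split.
- move=> [V [Vb [/isQCP [HVb [iV]] /isQCP [_ [iE]]]]].
  exact: dual_basis_of_qc_dual HVb iV iE.
- move=> [n [e [psi dec]]].
  exists (Vmod e psi), (Vfun e psi); split; first exact: isQC_Vfun.
  exact: isQC_dual_Vfun.
Qed.
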